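(* Let $G$ be a planar PCC graph and let $Z$ be the number of vertices $v$ with face vector $f(v)=(5,6,7)$ or $f(v)=(3,3,5,7)$. Then $Z\le 210$.
   Context: $G$ is a finite simple connected graph 2-cell embedded in the sphere; the face vector $f(v)$ is the multiset of sizes (boundary walk lengths) of the faces incident to $v$, one per corner, in nondecreasing order; $K(v)=1-\frac{\deg(v)}{2}+\sum_{\sigma\in F(v)}\frac1{|\sigma|}$. A prism (resp. antiprism) of order $N$ is the planar graph with $2N$ vertices, two $N$-faces and $N$ quadrilaterals (resp. $2N$ triangles), each vertex incident to two quadrilaterals and one $N$-face (resp. three triangles and one $N$-face). A planar PCC graph is such a $G$ with $K(v)>0$, $\deg(v)\ge3$ for all $v$, not a prism or antiprism. *)

From HB Require Import structures.
From mathcomp Require Import all_boot all_order all_algebra.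
Set Implicit Arguments. Unset Strict Implicit. Unset Printing Implicit Defensive.
Import Order.TTheory GRing.Theory Num.Theory.

(* A combinatorial map: darts, a fixed-point-free involution [edge] pairing
   the two half-edges of each edge, and a permutation [node] giving the
   cyclic rotation of darts around each vertex.  Vertices = node-orbits,
   edges = edge-orbits, faces = orbits of [face := node \o edge]. *)
Unset Implicit Arguments.
Record cmap := CMap {
  dart : finType;
  edge : dart -> dart;
  node : dart -> dart;
  edgeK : involutive edge;
  edge_nofix : forall d, edge d != d;
  node_inj : injective node
}.

Set Implicit Arguments.
Definition face (m : cmap) : dart m -> dart m := fun d => node m (edge m d).
Arguments face m : clear implicits.

Definition nV (m : cmap) : nat := fcard (node m) (dart m).
Definition nE (m : cmap) : nat := fcard (edge m) (dart m).
Definition nF (m : cmap) : nat := fcard (face m) (dart m).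

Definition connected_map (m : cmap) : Prop :=
  forall x y : dart m, connect (fun a b => (b == edge m a) || (b == node m a)) x y.

(* connected + Euler characteristic 2 : a 2-cell embedding in the sphere *)
Definition spherical (m : cmap) : Prop :=
  connected_map m /\ (nV m + nF m = nE m + 2)%N.

Definition simple_map (m : cmap) : Prop :=
  (forall d : dart m, ~~ fconnect (node m) d (edge m d)) /\
  (forall d d' : dart m, fconnect (node m) d d' ->
      fconnect (node m) (edge m d) (edge m d') -> d = d').

Definition deg (m : cmap) (d : dart m) : nat := order (node m) d.

Definition fsize (m : cmap) (d : dart m) : nat := order (face m) d.

(* face vector of the vertex of d: one face size per corner (= per dart at the
   vertex); as a multiset, compared up to permutation *)
Definition fvec (m : cmap) (d : dart m) : seq nat :=
  [seq fsize x | x <- orbit (node m) d].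

Definition curv (m : cmap) (d : dart m) : rat :=
  1 - (deg d)%:R / 2 + \sum_(x <- orbit (node m) d) ((fsize x)%:R)^-1.

Definition face_sizes (m : cmap) : seq nat :=
  [seq fsize x | x <- enum (froots (face m))].

Definition is_prism (m : cmap) : Prop :=
  exists N : nat, nV m = (2 * N)%N /\
    perm_eq (face_sizes m) (nseq 2 N ++ nseq N 4) /\
    (forall d : dart m, perm_eq (fvec d) [:: 4; 4; N]).

Definition is_antiprism (m : cmap) : Prop :=
  exists N : nat, nV m = (2 * N)%N /\
    perm_eq (face_sizes m) (nseq 2 N ++ nseq (2 * N) 3) /\
    (forall d : dart m, perm_eq (fvec d) [:: 3; 3; 3; N]).

Definition planar_PCC (m : cmap) : Prop :=
  spherical m /\ simple_map m /\
  (forall d : dart m, (0 < curv d)%R /\ (3 <= deg d)%N) /\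
  ~ is_prism m /\ ~ is_antiprism m.

(* number of vertices with face vector (5,6,7) or (3,3,5,7);
   vertices are counted via the representative (root) dart of each node orbit *)
Definition Zcount (m : cmap) : nat :=
  #|[pred d : dart m | froots (node m) d &&
       (perm_eq (fvec d) [:: 5; 6; 7] || perm_eq (fvec d) [:: 3; 3; 5; 7])]|.

From mathcomp Require Import all_boot all_order all_algebra.
From mathcomp Require Import ring lra.
Set Implicit Arguments. Unset Strict Implicit. Unset Printing Implicit Defensive.
Import Order.TTheory GRing.Theory Num.Theory.

(* Combinatorial Gauss-Bonnet: summing K over the vertices, the degree terms
   add up to the number of darts (= 2|E|) and the face terms to |F|, since each
   face of size k receives 1/k from each of its k corners; so the total
   curvature is |V| - |E| + |F| = 2.  All curvatures are positive and each
   vertex with face vector (5,6,7) or (3,3,5,7) has curvature exactly 1/105,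
   hence there are at most 2 * 105 = 210 of them. *)

Local Open Scope ring_scope.

Section OrbitSums.
Variables (T : finType) (f : T -> T).

Lemma sum1_orbit (R : pzSemiRingType) (x : T) :
  \sum_(y <- orbit f x) (1 : R) = (order f x)%:R.
Proof.
rewrite big_uniq ?orbit_uniq // sumr_const.
by rewrite -[#|_|]/(#|[pred y in orbit f x]|) (card_uniqP (orbit_uniq f x)) size_orbit.
Qed.

Hypothesis f_inj : injective f.

Lemma sum_froots_orbit (V : nmodType) (F : T -> V) :
  \sum_(r | froots f r) \sum_(x <- orbit f r) F x = \sum_x F x.
Proof.
have symf := fconnect_sym f_inj.
rewrite [RHS](partition_big (froot f) (froots f)) /=; last first.
  by move=> x _; exact: (roots_root symf).
apply: eq_bigr => r /eqP rootr.
rewrite big_uniq ?orbit_uniq //; apply: eq_bigl => x.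
by rewrite -fconnect_orbit -(root_connect symf) rootr eq_sym.
Qed.

Lemma sum_inv_order (R : numFieldType) :
  \sum_x ((order f x)%:R : R)^-1 = #|froots f|%:R.
Proof.
rewrite -sum_froots_orbit -sumr_const; apply: eq_bigr => r _.
have cyc := cycle_orbit f_inj r.
rewrite (eq_big_seq (fun=> (order f r)%:R^-1)); last first.
  by move=> x xo; rewrite (eq_order_cycle cyc (in_orbit f r) xo).
have -> : \sum_(x <- orbit f r) (order f r)%:R^-1 =
    (order f r)%:R^-1 * \sum_(x <- orbit f r) (1 : R).
  by rewrite mulr_sumr; under [RHS]eq_bigr do rewrite mulr1.
by rewrite sum1_orbit mulVf // pnatr_eq0 -lt0n order_gt0.
Qed.

End OrbitSums.

Lemma nE_double (m : cmap) : (nE m * 2 = #|dart m|)%N.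
Proof.
apply: fcard_order_set; first exact: inv_inj (edgeK m).
  apply/subsetP => x _; rewrite inE; apply/eqP.
  have cyc : fcycle (edge m) [:: x; edge m x].
    by rewrite /= !eqxx /= (edgeK m) eqxx.
  apply: (order_cycle cyc) => //; last by rewrite mem_head.
  by rewrite /= inE eq_sym (negbTE (edge_nofix m x)).
by [].
Qed.

Lemma curv_perm_fvec (m : cmap) (d : dart m) (s : seq nat) :
  perm_eq (fvec d) s -> curv d = 1 - (size s)%:R / 2 + \sum_(k <- s) (k%:R)^-1.
Proof.
move=> fvec_s; rewrite -(perm_size fvec_s) -(perm_big _ fvec_s).
by rewrite /curv big_map /fvec size_map size_orbit.
Qed.

Lemma curv_Z_vertex (m : cmap) (d : dart m) :
  perm_eq (fvec d) [:: 5; 6; 7]%N || perm_eq (fvec d) [:: 3; 3; 5; 7]%N ->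
  curv d = 1 / 105.
Proof. by case/orP => /curv_perm_fvec ->; rewrite !big_cons big_nil /=; field. Qed.

Lemma curv_sum_froots (m : cmap) : spherical m ->
  \sum_(d | froots (node m) d) curv d = 2.
Proof.
case=> _ euler.
have node_injm := node_inj m.
have face_injm : injective (face m) by apply: inj_comp (inv_inj (edgeK m)).
have nV_roots : nV m = #|froots (node m)| by apply: eq_card => x; rewrite !inE andbT.
have nF_roots : nF m = #|froots (face m)| by apply: eq_card => x; rewrite !inE andbT.
have sum_deg : \sum_(d | froots (node m) d) ((deg d)%:R : rat) = #|dart m|%:R.
  rewrite -sumr_const -(sum_froots_orbit node_injm).
  by apply: eq_bigr => r _; rewrite sum1_orbit.
have sum_corners : \sum_(d | froots (node m) d)
    \sum_(x <- orbit (node m) d) ((fsize x)%:R : rat)^-1 = (nF m)%:R.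
  by rewrite (sum_froots_orbit node_injm) nF_roots -(sum_inv_order face_injm).
rewrite /curv !big_split /= sum_corners sumrN -mulr_suml sum_deg sumr_const -nV_roots.
have eulerR : ((nV m)%:R + (nF m)%:R : rat) = (nE m)%:R + 2 by rewrite -!natrD euler.
rewrite -(nE_double m) natrM; lra.
Qed.

Lemma card_curv_ge_le (m : cmap) (P : pred (dart m)) (c : rat) :
  spherical m -> (forall d : dart m, 0 <= curv d) -> (forall d, P d -> c <= curv d) ->
  #|[pred d | froots (node m) d && P d]|%:R * c <= 2.
Proof.
move=> sph curv_ge0 curv_ge_c.
rewrite -(curv_sum_froots sph) (bigID P) /= -[X in X <= _]addr0.
apply: lerD; last exact: sumr_ge0.
rewrite mulr_natl -sumr_const.
by apply: ler_sum => d /andP[_ /curv_ge_c].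
Qed.

Theorem lemma15p1 (m : cmap) (Hm : planar_PCC m) : (Zcount m <= 210)%N.
Proof.
case: Hm => sph [_ [pos _]].
have curvZ (d : dart m) : perm_eq (fvec d) [:: 5; 6; 7]%N
    || perm_eq (fvec d) [:: 3; 3; 5; 7]%N -> 1 / 105 <= curv d.
  by move/curv_Z_vertex ->; exact: lexx.
have := card_curv_ge_le sph (fun d => ltW (pos d).1) curvZ.
rewrite -[#|_|]/(Zcount m) -(ler_nat rat) => ?; lra.
Qed.
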